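(* Let $H$ be a matroid that is vertically connected but not vertically $3$-connected, and let $z$ be an element of $H$ such that $H/z$ is vertically $3$-connected. If $A$ is a minimal (under inclusion) vertical $2$-separating set of $H$ containing $z$, then $A$ is a cocircuit of $H$ of rank $2$.
   Context: For $A\subseteq E(H)$, $\lambda_H(A)=r_H(A)+r_H(E(H)-A)-r(H)$. A partition $\{A,B\}$ of $E(H)$ is a vertical $k$-separation if $\lambda_H(A)\le k-1$ and $r_H(A),r_H(B)\ge k$; a vertical $2$-separating set is a set $A$ such that $\{A,E(H)-A\}$ is a vertical $2$-separation. $H$ is vertically connected if it has no vertical $1$-separation, and vertically $3$-connected if it has no vertical $1$- or $2$-separation. *)

From mathcomp Require Import all_boot.
Set Implicit Arguments. Unset Strict Implicit. Unset Printing Implicit Defensive.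

Definition is_matroid (T : finType) (E : {set T}) (r : {set T} -> nat) : Prop :=
  [/\ forall X : {set T}, X \subset E -> r X <= #|X|,
      forall X Y : {set T}, X \subset Y -> Y \subset E -> r X <= r Y &
      forall X Y : {set T}, X \subset E -> Y \subset E ->
        r (X :|: Y) + r (X :&: Y) <= r X + r Y].

Definition lambda (T : finType) (E : {set T}) (r : {set T} -> nat) (A : {set T}) : nat :=
  r A + r (E :\: A) - r E.

Definition vert_sep (T : finType) (E : {set T}) (r : {set T} -> nat) (k : nat)
  (A : {set T}) : Prop :=
  [/\ A \subset E, lambda E r A <= k - 1, k <= r A & k <= r (E :\: A)].

Definition vert_2sep_set (T : finType) (E : {set T}) (r : {set T} -> nat)
  (A : {set T}) : Prop := vert_sep E r 2 A.

Definition vert_connected (T : finType) (E : {set T}) (r : {set T} -> nat) : Prop :=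
  forall A : {set T}, ~ vert_sep E r 1 A.

Definition vert_3connected (T : finType) (E : {set T}) (r : {set T} -> nat) : Prop :=
  forall A : {set T}, ~ vert_sep E r 1 A /\ ~ vert_sep E r 2 A.

Definition contr_ground (T : finType) (E : {set T}) (z : T) : {set T} := E :\ z.
Definition contr_rank (T : finType) (r : {set T} -> nat) (z : T) : {set T} -> nat :=
  fun X => r (X :|: [set z]) - r [set z].

Definition dual_rank (T : finType) (E : {set T}) (r : {set T} -> nat) : {set T} -> nat :=
  fun X => #|X| + r (E :\: X) - r E.

Definition circuit (T : finType) (E : {set T}) (r : {set T} -> nat) (C : {set T}) : Prop :=
  [/\ C \subset E, r C < #|C| &
      forall D : {set T}, D \proper C -> r D = #|D|].

Definition cocircuit (T : finType) (E : {set T}) (r : {set T} -> nat) (C : {set T}) : Prop :=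
  circuit E (dual_rank E r) C.

From mathcomp Require Import all_boot.
From mathcomp Require Import zify.

(* In H/z the complement of A - z is E - A, so comparing the connectivity
   functions of H and H/z shows that z is not a loop, that z is not in the
   closure of B = E - A, and that r(A) = 2; vertical connectivity then makes
   B a hyperplane of H.  Finally, minimality of A forces every x in A to
   span H together with B (otherwise A - x would be a smaller vertical 1- or
   2-separating set), so A, the complement of a hyperplane, is a cocircuit. *)

Section MatroidRank.

Context {T : finType} {E : {set T}} {r : {set T} -> nat}.
Hypothesis r_matroid : is_matroid E r.

Lemma rank_le_card {X : {set T}} : X \subset E -> r X <= #|X|.
Proof. by move: r_matroid => [le_card _ _]; apply: le_card. Qed.

Lemma rank_mono {X Y : {set T}} : X \subset Y -> Y \subset E -> r X <= r Y.
Proof. by move: r_matroid => [_ mono _]; apply: mono. Qed.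

Lemma rank_submod {X Y : {set T}} : X \subset E -> Y \subset E ->
  r (X :|: Y) + r (X :&: Y) <= r X + r Y.
Proof. by move: r_matroid => [_ _ submod]; apply: submod. Qed.

Lemma rank_set1_le1 {x : T} : x \in E -> r [set x] <= 1.
Proof. by move=> xE; rewrite -(cards1 x) rank_le_card ?sub1set. Qed.

Lemma rank_subadd {X Y : {set T}} : X \subset E -> Y \subset E ->
  r (X :|: Y) <= r X + r Y.
Proof. by move=> XE YE; have := rank_submod XE YE; lia. Qed.

Lemma rank_le_compl {X : {set T}} : X \subset E -> r E <= r X + r (E :\: X).
Proof.
move=> XE; have := rank_subadd XE (subsetDl E X).
by rewrite setDE setUIr setUCr setIT (setUidPr XE).
Qed.

Lemma cocircuit_compl_hyperplane (A : {set T}) : A \subset E ->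
  r (E :\: A) < r E -> (forall x, x \in A -> r (E :\: A :|: [set x]) = r E) ->
  cocircuit E r A.
Proof.
move=> AE ltBE spanA; split=> //.
  have : 0 < #|A| by rewrite card_gt0; apply: contraTneq ltBE => ->; rewrite setD0 ltnn.
  by rewrite /dual_rank; lia.
move=> D /properP [DA [x xA xD]].
have xE : x \in E := subsetP AE x xA.
have BxD : E :\: A :|: [set x] \subset E :\: D.
  by rewrite subUset sub1set inE xD xE setDS.
have le_DE := rank_mono (subsetDl E D) (subxx E).
have := rank_mono BxD (subsetDl E D); rewrite spanA // => le_ED.
by rewrite /dual_rank (@anti_leq (r (E :\: D)) (r E)) ?le_DE ?le_ED ?addnK.
Qed.

Section Contraction.

Context {z : T} {A : {set T}}.
Hypotheses (zE : z \in E) (zA : z \in A) (AE : A \subset E).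

Let rc := contr_rank r z.
Let Ec := contr_ground E z.

Lemma contr_rank_setD1 : rc (A :\ z) = r A - r [set z].
Proof. by rewrite /rc /contr_rank setUC setD1K. Qed.

Lemma contr_rank_compl_setD1 :
  rc (Ec :\: (A :\ z)) = r (E :\: A :|: [set z]) - r [set z].
Proof.
congr (r _ - _); apply/setP=> y; rewrite !inE.
by case: (eqVneq y z) => [->|]; rewrite ?zA ?zE ?orbT //= andbT.
Qed.

Lemma contr_rank_ground : rc Ec = r E - r [set z].
Proof. by rewrite /rc /Ec /contr_rank /contr_ground setUC setD1K. Qed.

(* Stated additively because lambda uses truncated subtraction. *)
Lemma lambda_contr :
  lambda Ec rc (A :\ z) + r [set z] + r (E :\: A)
  = lambda E r A + r (E :\: A :|: [set z]).
Proof.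
have BE := subsetDl E A; have zsE : [set z] \subset E by rewrite sub1set.
have BzE : E :\: A :|: [set z] \subset E by rewrite subUset BE.
have le_zA : r [set z] <= r A by apply: rank_mono; rewrite ?sub1set.
have le_zBz := rank_mono (subsetUr (E :\: A) [set z]) BzE.
have le_BBz := rank_mono (subsetUl (E :\: A) [set z]) BzE.
have le_BzE := rank_mono BzE (subxx E).
have submod := rank_submod AE BzE.
have UE : A :|: (E :\: A :|: [set z]) = E.
  by rewrite setUA setDE setUIr setUCr setIT (setUidPr AE) (setUidPl zsE).
have IE : A :&: (E :\: A :|: [set z]) = [set z].
  by rewrite setIUr setDE setICA setICr setI0 set0U; apply/setIidPr; rewrite sub1set.
rewrite UE IE in submod.
have := rank_le_compl AE.
rewrite /lambda contr_rank_setD1 contr_rank_compl_setD1 contr_rank_ground in submod *.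
lia.
Qed.

End Contraction.

Section MinimalVerticalSeparation.

Context {z : T} {A : {set T}}.
Hypotheses (zE : z \in E) (zA : z \in A).
Hypothesis sepA : vert_2sep_set E r A.
Hypothesis contr3 : vert_3connected (contr_ground E z) (contr_rank r z).

Local Notation B := (E :\: A).

Lemma contr3_sep_ranks :
  [/\ r [set z] = 1, r (B :|: [set z]) = r B + 1 & r A = 2].
Proof.
move: sepA => [AE lamA rA rB].
have [no1 no2] := contr3 (A :\ z).
have subAz : A :\ z \subset contr_ground E z := setSD _ AE.
have lam := lambda_contr zE zA AE.
rewrite /vert_sep contr_rank_setD1 // contr_rank_compl_setD1 // in no1 no2.
have zsE : [set z] \subset E by rewrite sub1set.
have BzE : B :|: [set z] \subset E by rewrite subUset subsetDl.
have le_z1 := rank_set1_le1 zE.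
have le_Bz := rank_subadd (subsetDl E A) zsE.
have le_BBz := rank_mono (subsetUl B [set z]) BzE.
have rz : r [set z] = 1.
  case: (ltnP 0 (r [set z])) => [|le_z0]; first by lia.
  by exfalso; apply: no2; split=> //; lia.
have rBz : r (B :|: [set z]) = r B + 1.
  case: (ltnP (r B) (r (B :|: [set z]))) => [|le_BzB]; first by lia.
  by exfalso; apply: no1; split=> //; lia.
split=> //; case: (leqP (r A) 2) => [|lt2A]; first by lia.
by exfalso; apply: no2; split=> //; lia.
Qed.

Hypothesis vconn : vert_connected E r.

Lemma rank_ground_sep : r E = r B + 1.
Proof.
move: sepA => [AE lamA _ rB]; have [_ _ rA] := contr3_sep_ranks.
rewrite /lambda in lamA; case: (leqP (r E) (r B + 1)) => [|ltBE]; first by lia.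
by exfalso; apply: (vconn A); split=> //; rewrite /lambda; lia.
Qed.

Hypothesis minA : forall D : {set T}, D \proper A -> z \in D -> ~ vert_2sep_set E r D.

Lemma rank_compl_setU1_sep x : x \in A -> r (B :|: [set x]) = r E.
Proof.
move: (sepA) => [AE _ _ rB] xA; have [rz rBz rA] := contr3_sep_ranks.
have rEB := rank_ground_sep.
case: (eqVneq x z) => [->|xz]; first by rewrite rBz rEB.
have xE : x \in E := subsetP AE x xA.
have BxE : B :|: [set x] \subset E by rewrite subUset subsetDl sub1set.
have := rank_mono (subsetUl B [set x]) BxE; have := rank_mono BxE (subxx E).
case: (ltnP (r B) (r (B :|: [set x]))) => [|le_BxB le_BxE le_BBx]; first by lia.
exfalso; have AxE : A :\ x \subset E := subset_trans (subD1set A x) AE.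
have zAx : z \in A :\ x by rewrite !inE zA eq_sym xz.
have complAx : E :\: (A :\ x) = B :|: [set x].
  by rewrite setDDr; congr (_ :|: _); apply/setIidPr; rewrite sub1set.
have := rank_mono (subD1set A x) AE.
have : r [set z] <= r (A :\ x) by apply: rank_mono; rewrite ?sub1set.
case: (leqP 2 (r (A :\ x))) => [le2Ax|ltAx2] le_zAx le_AxA.
  by apply: (minA _ (properD1 xA) zAx); split; rewrite /lambda ?complAx //; lia.
by apply: (vconn (A :\ x)); split; rewrite /lambda ?complAx //; lia.
Qed.

End MinimalVerticalSeparation.

End MatroidRank.

Theorem lemma3p3 (T : finType) (E : {set T}) (r : {set T} -> nat) (z : T)
  (A : {set T}) :
  is_matroid E r ->
  vert_connected E r ->
  ~ vert_3connected E r ->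
  z \in E ->
  vert_3connected (contr_ground E z) (contr_rank r z) ->
  vert_2sep_set E r A -> z \in A ->
  (forall B : {set T}, B \proper A -> z \in B -> ~ vert_2sep_set E r B) ->
  cocircuit E r A /\ r A = 2.
Proof.
move=> r_matroid vconn _ zE contr3 sepA zA minA.
have [_ _ rA] := contr3_sep_ranks r_matroid zE zA sepA contr3.
split=> //; apply: cocircuit_compl_hyperplane => //.
- by case: sepA.
- by rewrite (rank_ground_sep r_matroid zE zA sepA contr3 vconn) addn1.
- exact: (rank_compl_setU1_sep r_matroid zE zA sepA contr3 vconn minA).
Qed.
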